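(* Let $I=(N,O,\succsim)$ be a general instance and $p$ a generalized deterministic matching, with associated deterministic matching $p'$ for the associated instance $I'$. Then $p$ is weakly stable if and only if $p'$ is weakly stable.
   Context: General instance: $N=\{1,\dots,n\}$ agents, $O=\{o_1,\dots,o_m\}$ objects ($m,n\ge1$ arbitrary), $\emptyset$ the null object. Each agent $i$ has a weak order $\succsim_i$ over $O\cup\{\emptyset\}$ and each object $o$ a weak order $\succsim_o$ over $N\cup\{\emptyset\}$, with either $o\succ_i\emptyset$ or $\emptyset\succ_i o$, and either $i\succ_o\emptyset$ or $\emptyset\succ_o i$. $(i,o)$ is an acceptable pair if $o\succ_i\emptyset$ and $i\succ_o\emptyset$. A generalized deterministic matching is an $n\times m$ $\{0,1\}$-matrix with at most one $1$ per row and column. $p$ is individually rational if $p(i,o)=0$ whenever $\emptyset\succ_i o$ or $\emptyset\succ_o i$. $p$ is weakly stable if it is individually rational and there is no acceptable pair $(i,o)$ with $\sum_{o':o'\succsim_i o}p(i,o')=0$ and $\sum_{j:j\succsim_o i}p(j,o)=0$. Associated instance: $D=\{d_1,\dots,d_m\}$, $\Phi=\{\phi_1,\dots,\phi_n\}$, $N'=N\cup D$, $O'=O\cup\Phi$. Weak orders $\succsim'$ (blocks from best to worst, consecutive blocks strictly ordered): for $i\in N$: objects acceptable to $i$ ordered by $\succsim_i$, then $\phi_i$, then $\phi_k$ ($k\ne i$) in increasing index, then objects unacceptable to $i$ ordered by $\succsim_i$; for $o_j$: agents acceptable to $o_j$ ordered by $\succsim_{o_j}$, then $d_j$, then $d_k$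 ($k\ne j$) in increasing index, then agents unacceptable to $o_j$ ordered by $\succsim_{o_j}$; for $d_j$: $o_j$, then the other objects of $O$ in increasing index, then null objects with $\phi_k\succsim'_{d_j}\phi_l$ iff $k\succsim_{o_j}l$; for $\phi_i$: $i$, then other agents of $N$ in increasing index, then dummies with $d_k\succsim'_{\phi_i}d_l$ iff $o_k\succsim_i o_l$. The associated matching $p'$: $p'(i,o_j)=p(i,o_j)$, $p'(d_j,\phi_i)=p(i,o_j)$, $p'(i,\phi_i)=1-\sum_{o}p(i,o)$, $p'(d_j,o_j)=1-\sum_{i}p(i,o_j)$, all other entries $0$. A deterministic matching $q$ for $I'$ is weakly stable if there are no $a,b\in N'$, $c,c'\in O'$ with $q(a,c')=1$, $q(b,c)=1$, $c\succ'_a c'$, $a\succ'_c b$. *)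

From mathcomp Require Import all_boot.
Set Implicit Arguments. Unset Strict Implicit. Unset Printing Implicit Defensive.

(* Agents N = 'I_n, objects O = 'I_m; the null object / null agent is [None].
   Agent preferences: apref i : rel (option 'I_m)  (apref i x y  <=>  x ≿_i y).
   Object priorities: opref o : rel (option 'I_n)  (opref o x y  <=>  x ≿_o y). *)

Definition strict {T} (r : rel T) (x y : T) : bool := r x y && ~~ r y x.

Definition weak_order {T} (r : rel T) : Prop := total r /\ transitive r.

Section Instance.
Variables (n m : nat).
Variable apref : 'I_n -> rel (option 'I_m).
Variable opref : 'I_m -> rel (option 'I_n).

Definition general_instance : Prop :=
  (forall i, weak_order (apref i)) /\ (forall o, weak_order (opref o)) /\
  (forall i o, strict (apref i) (Some o) None \/ strict (apref i) None (Some o)) /\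
  (forall o i, strict (opref o) (Some i) None \/ strict (opref o) None (Some i)).

Definition acc_ag (i : 'I_n) (o : 'I_m) : bool := strict (apref i) (Some o) None.
Definition acc_ob (o : 'I_m) (i : 'I_n) : bool := strict (opref o) (Some i) None.
Definition acceptable_pair i o : bool := acc_ag i o && acc_ob o i.

Definition gen_det_matching (p : 'I_n -> 'I_m -> nat) : Prop :=
  (forall i o, p i o = 0 \/ p i o = 1) /\
  (forall i, \sum_(o < m) p i o <= 1) /\
  (forall o, \sum_(i < n) p i o <= 1).

Definition indiv_rational (p : 'I_n -> 'I_m -> nat) : Prop :=
  forall i o, strict (apref i) None (Some o) \/ strict (opref o) None (Some i) ->
    p i o = 0.

Definition weakly_stable (p : 'I_n -> 'I_m -> nat) : Prop :=
  indiv_rational p /\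
  ~ (exists i o, acceptable_pair i o /\
       \sum_(o' < m | apref i (Some o') (Some o)) p i o' = 0 /\
       \sum_(j < n | opref o (Some j) (Some i)) p j o = 0).

(* ---------- Associated instance I' ----------
   N' = N ∪ D  is  'I_n + 'I_m   (inl i = agent i, inr j = dummy d_j)
   O' = O ∪ Φ  is  'I_m + 'I_n   (inl o = object o, inr i = null object φ_i) *)
Definition agentT' := ('I_n + 'I_m)%type.
Definition objT' := ('I_m + 'I_n)%type.

(* block-lexicographic comparison: strictly ordered blocks (smaller block number
   = better), and a within-block weak comparison *)
Definition lexb (b1 b2 : nat) (w : bool) : bool := (b1 < b2) || ((b1 == b2) && w).

Definition blk_ag (i : 'I_n) (c : objT') : nat :=
  match c with
  | inl o => if acc_ag i o then 0 else 3
  | inr k => if k == i then 1 else 2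
  end.
Definition win_ag (i : 'I_n) (c c' : objT') : bool :=
  match c, c' with
  | inl o, inl o' => apref i (Some o) (Some o')
  | inr k, inr l => (k <= l)%N
  | _, _ => true
  end.

Definition blk_d (j : 'I_m) (c : objT') : nat :=
  match c with
  | inl o => if o == j then 0 else 1
  | inr _ => 2
  end.
Definition win_d (j : 'I_m) (c c' : objT') : bool :=
  match c, c' with
  | inl o, inl o' => (o <= o')%N
  | inr k, inr l => opref j (Some k) (Some l)
  | _, _ => true
  end.

Definition apref' (a : agentT') : rel objT' :=
  fun c c' => match a with
  | inl i => lexb (blk_ag i c) (blk_ag i c') (win_ag i c c')
  | inr j => lexb (blk_d j c) (blk_d j c') (win_d j c c')
  end.

Definition blk_ob (j : 'I_m) (a : agentT') : nat :=
  match a with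
  | inl i => if acc_ob j i then 0 else 3
  | inr k => if k == j then 1 else 2
  end.
Definition win_ob (j : 'I_m) (a a' : agentT') : bool :=
  match a, a' with
  | inl i, inl i' => opref j (Some i) (Some i')
  | inr k, inr l => (k <= l)%N
  | _, _ => true
  end.

Definition blk_phi (i : 'I_n) (a : agentT') : nat :=
  match a with
  | inl k => if k == i then 0 else 1
  | inr _ => 2
  end.
Definition win_phi (i : 'I_n) (a a' : agentT') : bool :=
  match a, a' with
  | inl k, inl l => (k <= l)%N
  | inr k, inr l => apref i (Some k) (Some l)
  | _, _ => true
  end.

Definition opref' (c : objT') : rel agentT' :=
  fun a a' => match c with
  | inl j => lexb (blk_ob j a) (blk_ob j a') (win_ob j a a')
  | inr i => lexb (blk_phi i a) (blk_phi i a') (win_phi i a a')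
  end.

Definition assoc_matching (p : 'I_n -> 'I_m -> nat) (a : agentT') (c : objT') : nat :=
  match a, c with
  | inl i, inl o => p i o
  | inr j, inr i => p i j
  | inl i, inr k => if k == i then 1 - \sum_(o < m) p i o else 0
  | inr j, inl o => if o == j then 1 - \sum_(i < n) p i j else 0
  end.

Definition weakly_stable' (q : agentT' -> objT' -> nat) : Prop :=
  ~ (exists (a b : agentT') (c c' : objT'),
       [/\ q a c' = 1, q b c = 1, strict (apref' a) c c' & strict (opref' c) a b]).

End Instance.

(* Say that i envies o when i accepts o and holds in p nothing it likes at least
   as much as o; a blocking pair of p is a pair envious on both sides.  In I' every
   agent and object has a partner: its p-partner, or else its own null object or
   dummy, which it ranks above every unacceptable partner and below every acceptable
   one.  Hence an agent i of I' prefers some c to its p'-partner only if c is an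
   object envied by i, and a dummy d_j prefers phi_k to its partner phi_i only if
   o_j ranks k above its p-partner i.  So a blocking pair of p' is either a blocking
   pair (i, o) of p, or a pair (d_j, phi_k) whose preferences make (k, o_j) block p.
   Conversely a blocking pair of p blocks p', and an unacceptable assignment (i, o)
   makes (i, phi_i) or (d_o, o) block p'.  Transposing p exchanges agents and
   objects, so every object-side fact is an agent-side fact of the transposed
   instance. *)

From mathcomp Require Import all_boot zify.

Set Implicit Arguments.
Unset Strict Implicit.
Unset Printing Implicit Defensive.

Lemma strict_trans T (r : rel T) : transitive r -> transitive (strict r).
Proof.
move=> tr y x z /andP[rxy nyx] /andP[ryz nzy]; apply/andP; split.
  exact: tr rxy ryz.
by apply: contra nzy => rzx; apply: tr rzx rxy.
Qed.

Lemma strict_total T (r : rel T) x y : total r -> ~~ r x y -> strict r y x.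
Proof.
move=> tot nxy; rewrite /strict nxy andbT.
by case/orP: (tot x y) => // rxy; rewrite rxy in nxy.
Qed.

Lemma strict_lexb b1 b2 w w' :
  lexb b1 b2 w && ~~ lexb b2 b1 w' = (b1 < b2) || (b1 == b2) && (w && ~~ w').
Proof. by rewrite /lexb; case: ltngtP. Qed.

Lemma sum_eq0P (T : finType) (P : pred T) (F : T -> nat) :
  reflect (forall x, P x -> F x = 0) (\sum_(x | P x) F x == 0).
Proof.
by rewrite sum_nat_eq0; apply: (iffP forall_inP) => h x /h => [/eqP | ->].
Qed.

Lemma sum_le1_uniq (T : finType) (F : T -> nat) x y :
  \sum_z F z <= 1 -> F x = 1 -> F y = 1 -> x = y.
Proof.
move=> le1 Fx Fy; apply/eqP; apply: contraTT le1 => neq_xy.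
by rewrite (bigD1 x) // (bigD1 y) 1?eq_sym //= Fx Fy; lia.
Qed.

Definition envies n m (apref : 'I_n -> rel (option 'I_m)) (p : 'I_n -> 'I_m -> nat)
    (i : 'I_n) (o : 'I_m) : Prop :=
  acc_ag apref i o /\ \sum_(o' | apref i (Some o') (Some o)) p i o' = 0.

Section AgentSide.

Variables (n m : nat) (apref : 'I_n -> rel (option 'I_m)) (opref : 'I_m -> rel (option 'I_n)).
Variable p : 'I_n -> 'I_m -> nat.
Hypothesis inst : general_instance apref opref.
Hypothesis matching : gen_det_matching p.

Local Notation q := (assoc_matching p).
Local Notation A' := (apref' apref opref).

Lemma match01 i o : p i o = 0 \/ p i o = 1.
Proof. by case: matching. Qed.

Lemma agent_match_uniq i o o' : p i o = 1 -> p i o' = 1 -> o = o'.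
Proof. by case: matching => _ [rows _]; apply: sum_le1_uniq. Qed.

Lemma agent_unmatched_or_matched i : (forall o, p i o = 0) \/ exists o, p i o = 1.
Proof.
case: matching => _ [rows _]; move: (rows i); rewrite leq_eqVlt ltnS leqn0.
case/orP=> [/sum_nat_eq1[o [_ pio _]] | /sum_eq0P unmatched]; last by left=> o; apply: unmatched.
by right; exists o.
Qed.

Lemma matched_acc_ag i o : indiv_rational apref opref p -> p i o = 1 -> acc_ag apref i o.
Proof.
case: inst => _ [_ [acc _]] ir pio.
by case: (acc i o) => // unacc; move: (ir i o (or_introl unacc)); rewrite pio.
Qed.

Lemma assoc_agent_partnerP i c : q (inl i) c = 1 ->
  (exists2 o, c = inl o & p i o = 1) \/ (c = inr i /\ forall o, p i o = 0).
Proof.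
case: c => [o|k] /=; first by left; exists o.
case: eqP => // -> unmatched; right; split=> //.
case: (agent_unmatched_or_matched i) => // -[o pio]; exfalso.
by move: unmatched; rewrite (bigD1 o) //= pio add1n subSS sub0n.
Qed.

Lemma envies_of_improvement i o o' : indiv_rational apref opref p -> p i o' = 1 ->
  strict (apref i) (Some o) (Some o') -> envies apref p i o.
Proof.
case: inst => wa _ ir pio' better; split.
  exact: strict_trans (proj2 (wa i)) _ _ _ better (matched_acc_ag ir pio').
apply/eqP/sum_eq0P => o'' o''_ge_o; case: (match01 i o'') => // pio''.
by move: better; rewrite /strict -(agent_match_uniq pio'' pio') o''_ge_o andbF.
Qed.

Lemma agent_prefers_object i c c' : indiv_rational apref opref p ->
  q (inl i) c' = 1 -> strict (A' (inl i)) c c' -> exists2 o, c = inl o & envies apref p i o.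
Proof.
move=> ir /assoc_agent_partnerP[[o' -> pio'] | [-> unmatched]];
  rewrite /strict /= strict_lexb.
- rewrite (matched_acc_ag ir pio'); case: c => [o|k] /=; last by rewrite andbF.
  case: (acc_ag apref i o) => //= better.
  by exists o => //; apply: envies_of_improvement ir pio' better.
- rewrite (eqxx i); case: c => [o|k] /=; last by case: eqP => [->|]; rewrite ?leqnn ?andbF.
  case: (boolP (acc_ag apref i o)) => // acc _; exists o => //; split=> //.
  by apply/eqP/sum_eq0P => o' _; apply: unmatched.
Qed.

Lemma dummy_prefers_null j k c' : q (inr j) c' = 1 -> strict (A' (inr j)) (inr k) c' ->
  exists2 i, p i j = 1 & strict (opref j) (Some k) (Some i).
Proof.
case: c' => [o|i] /=; last by move=> pij; rewrite /strict /= strict_lexb /=; exists i.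
by case: eqP => // ->; rewrite /strict /= strict_lexb eqxx.
Qed.

Lemma envies_assoc_partner i o : envies apref p i o ->
  exists2 c', q (inl i) c' = 1 & strict (A' (inl i)) (inl o) c'.
Proof.
case: inst => wa _ [acc_o /eqP/sum_eq0P none_better].
have [unmatched | [o' pio']] := agent_unmatched_or_matched i.
  exists (inr i); last by rewrite /strict /= strict_lexb acc_o eqxx.
  by rewrite /= eqxx big1.
exists (inl o') => //; rewrite /strict /= strict_lexb acc_o.
case: (acc_ag apref i o') => //=; apply: strict_total (proj1 (wa i)) _.
by apply/negP => o'_ge_o; move: (none_better o' o'_ge_o); rewrite pio'.
Qed.

Lemma acc_ag_of_assoc_stable i o :
  weakly_stable' apref opref q -> p i o = 1 -> acc_ag apref i o.
Proof.
move=> stable' pio; apply/negPn/negP => unacc; apply: stable'.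
exists (inl i), (inr o), (inr i), (inl o).
by split=> //; rewrite /strict /= strict_lexb ?eqxx ?(negbTE unacc).
Qed.

End AgentSide.

Section Transpose.

Variables (n m : nat) (apref : 'I_n -> rel (option 'I_m)) (opref : 'I_m -> rel (option 'I_n)).
Variable p : 'I_n -> 'I_m -> nat.

Lemma general_instance_tr : general_instance apref opref -> general_instance opref apref.
Proof. by case=> wa [wo [ga go]]. Qed.

Lemma gen_det_matching_tr : gen_det_matching p -> gen_det_matching (fun o i => p i o).
Proof. by case=> p01 [rows cols]; split=> [o i|]; [apply: p01 | split]. Qed.

Lemma indiv_rational_tr :
  indiv_rational apref opref p -> indiv_rational opref apref (fun o i => p i o).
Proof. by move=> ir o i unacc; apply: ir; case: unacc; [right | left]. Qed.

Lemma assoc_matching_tr a c : assoc_matching (fun o i => p i o) a c = assoc_matching p c a.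
Proof. by case: a c => [o|i] [i'|j] //=; rewrite eq_sym; case: eqP => [->|]. Qed.

Lemma weakly_stable'_tr : weakly_stable' apref opref (assoc_matching p) ->
  weakly_stable' opref apref (assoc_matching (fun o i => p i o)).
Proof.
move=> stable' [a [b [c [c' [qac' qbc pref_a pref_c]]]]]; apply: stable'.
by exists c, c', a, b; rewrite -!assoc_matching_tr.
Qed.

End Transpose.

Section Stability.

Variables (n m : nat) (apref : 'I_n -> rel (option 'I_m)) (opref : 'I_m -> rel (option 'I_n)).
Variable p : 'I_n -> 'I_m -> nat.
Hypothesis inst : general_instance apref opref.
Hypothesis matching : gen_det_matching p.

Local Notation q := (assoc_matching p).
Local Notation pT := (fun o i => p i o).
Local Notation O' := (opref' apref opref).

(* Object-side lemmas are agent-side lemmas of the transposed instance, whose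
   [apref'] is convertible to our [opref']. *)
Let instT := general_instance_tr inst.
Let matchingT := gen_det_matching_tr matching.

Lemma envies_tr_of_improvement i i' o : indiv_rational apref opref p -> p i' o = 1 ->
  strict (opref o) (Some i) (Some i') -> envies opref pT o i.
Proof.
move=> /indiv_rational_tr ir pi'o better.
exact: (envies_of_improvement instT matchingT ir pi'o better).
Qed.

Lemma object_prefers_agent o a b : indiv_rational apref opref p ->
  q b (inl o) = 1 -> strict (O' (inl o)) a b -> exists2 i, a = inl i & envies opref pT o i.
Proof.
move=> /indiv_rational_tr ir; rewrite -assoc_matching_tr => qob better.
exact: (agent_prefers_object instT matchingT ir qob better).
Qed.

Lemma null_prefers_dummy i j b : q b (inr i) = 1 -> strict (O' (inr i)) (inr j) b ->
  exists2 o, p i o = 1 & strict (apref i) (Some j) (Some o).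
Proof. by rewrite -assoc_matching_tr; apply: dummy_prefers_null. Qed.

Lemma envies_tr_assoc_partner i o : envies opref pT o i ->
  exists2 b, q b (inl o) = 1 & strict (O' (inl o)) (inl i) b.
Proof. by case/(envies_assoc_partner instT matchingT) => b; rewrite assoc_matching_tr; exists b. Qed.

Lemma acc_ob_of_assoc_stable i o :
  weakly_stable' apref opref q -> p i o = 1 -> acc_ob opref o i.
Proof. by move/weakly_stable'_tr; apply: acc_ag_of_assoc_stable. Qed.

Lemma indiv_rational_of_acc :
  (forall i o, p i o = 1 -> acc_ag apref i o /\ acc_ob opref o i) ->
  indiv_rational apref opref p.
Proof.
move=> acc i o unacc; case: (match01 matching i o) => // /acc[/andP[ai _] /andP[ao _]].
by case: unacc => /andP[_]; rewrite ?ai ?ao.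
Qed.

Lemma weakly_stableE : weakly_stable apref opref p <->
  indiv_rational apref opref p /\ forall i o, ~ (envies apref p i o /\ envies opref pT o i).
Proof.
split=> -[ir unblocked]; split=> //.
- move=> i o [[ai s_i] [ao s_o]]; apply: unblocked.
  by exists i, o; split; first exact/andP.
- by move=> [i [o [/andP[ai ao] [s_i s_o]]]]; apply: (unblocked i o).
Qed.

Lemma assoc_stable_of_stable : weakly_stable apref opref p -> weakly_stable' apref opref q.
Proof.
move=> /weakly_stableE[ir unblocked] [[i|j] [b [[o|k] [c' [qac' qbc pref_a pref_c]]]]].
- have [_ [<-] envies_io] := agent_prefers_object inst matching ir qac' pref_a.
  have [_ [<-] envies_oi] := object_prefers_agent ir qbc pref_c.
  exact: unblocked i o (conj envies_io envies_oi).
- by have [] := agent_prefers_object inst matching ir qac' pref_a.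
- by have [] := object_prefers_agent ir qbc pref_c.
- have [i pij better_k] := dummy_prefers_null qac' pref_a.
  have [o pko better_j] := null_prefers_dummy qbc pref_c.
  apply: (unblocked k j); split; first exact: (envies_of_improvement inst matching ir pko better_j).
  exact: envies_tr_of_improvement ir pij better_k.
Qed.

Lemma stable_of_assoc_stable : weakly_stable' apref opref q -> weakly_stable apref opref p.
Proof.
move=> stable'; apply/weakly_stableE; split.
  apply: indiv_rational_of_acc => i o pio.
  by split; [apply: acc_ag_of_assoc_stable stable' pio | apply: acc_ob_of_assoc_stable stable' pio].
move=> i o [/(envies_assoc_partner inst matching)[c' qic' pref_i] /envies_tr_assoc_partner[b qbo pref_o]].
by apply: stable'; exists (inl i), b, (inl o), c'.
Qed.

End Stability.

Theorem proposition22 (n m : nat) (hn : 0 < n) (hm : 0 < m)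
    (apref : 'I_n -> rel (option 'I_m)) (opref : 'I_m -> rel (option 'I_n))
    (p : 'I_n -> 'I_m -> nat) :
  general_instance apref opref ->
  gen_det_matching p ->
  weakly_stable apref opref p <->
  weakly_stable' apref opref (assoc_matching p).
Proof.
by move=> inst matching; split; [apply: assoc_stable_of_stable | apply: stable_of_assoc_stable].
Qed.
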